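(* Let $b\ge2$ be an integer and let $w$ be a fixed block of $b$-ary digits of length $p\ge1$. For every integer $k\ge0$, $S_w(k)<\infty$, where $S_w(k)=\sum_m 1/m$ and $m$ ranges over the positive integers whose minimal base-$b$ representation (no leading zeros) contains exactly $k$ possibly overlapping occurrences of $w$. *)

From Stdlib Require Import Reals Arith List.
From Coquelicot Require Import Coquelicot.
Import ListNotations.

(* Base-b digits of m, most significant first, with no leading zeros
   (digits b 0 = []).  The fuel m suffices since m / b < m for b >= 2, m > 0. *)
Fixpoint digits_aux (b fuel m : nat) : list nat :=
  match fuel with
  | O => []
  | S f => if Nat.eqb m 0 then [] else digits_aux b f (m / b) ++ [m mod b]
  end.

Definition digits (b m : nat) : list nat := digits_aux b m m.

Definition occ (w s : list nat) : nat :=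
  length (filter (fun i =>
      if list_eq_dec Nat.eq_dec (firstn (length w) (skipn i s)) w
      then true else false)
    (seq 0 (length s))).

(* Weight each m >= 1 by f(m) = 2^-N(m) / m, where N(m) is the number of
   occurrences of w in the base-b digits of m, so that S_w(k) <= 2^k * sum f.
   Appending p = |w| digits to m never destroys an occurrence, and appending w
   itself creates one; hence the b^p numbers b^p m + r (r < b^p) satisfy
   sum_r f(b^p m + r) <= c f(m) with c = 1 - 1/(2 b^p).  Cutting [0, b^p (M+1))
   into such blocks gives S(b^p (M+1)) <= S(b^p) + c S(M+1) <= S(b^p) + c S(b^p (M+1))
   for the partial sums S, so they are bounded by S(b^p) / (1 - c). *)

From Stdlib Require Import Reals Arith List Lia Lra.
From Coquelicot Require Import Coquelicot.
Import ListNotations.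

Open Scope nat_scope.

Lemma digits_aux_fuel b (Hb : 2 <= b) :
  forall f1 f2 m, m <= f1 -> m <= f2 -> digits_aux b f1 m = digits_aux b f2 m.
Proof.
  induction f1 as [|f1 IH]; intros [|f2] m H1 H2; try (replace m with 0 by lia; reflexivity).
  simpl. destruct (Nat.eqb_spec m 0); [reflexivity|].
  assert (m / b < m) by (apply Nat.div_lt; lia).
  rewrite (IH f2); [reflexivity | lia | lia].
Qed.

Lemma digits_snoc b x d :
  2 <= b -> 1 <= x -> d < b -> digits b (b * x + d) = digits b x ++ [d].
Proof.
  intros Hb Hx Hd. unfold digits.
  destruct (b * x + d) as [|f] eqn:Em; [nia|]. simpl. rewrite <- Em.
  replace (b * x + d =? 0) with false by (symmetry; apply Nat.eqb_neq; lia).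
  rewrite Nat.mul_comm, Nat.div_add_l, Nat.div_small, Nat.add_0_r by lia.
  rewrite Nat.add_comm, Nat.Div0.mod_add, Nat.mod_small by lia.
  rewrite (digits_aux_fuel b Hb f x x) by nia. reflexivity.
Qed.

Lemma digits_shift_add b p x r :
  2 <= b -> 1 <= x -> r < b ^ p -> exists t, digits b (b ^ p * x + r) = digits b x ++ t.
Proof.
  intros Hb Hx. revert r. induction p as [|p IH]; intros r Hr.
  - exists []. simpl in Hr. replace r with 0 by lia.
    rewrite app_nil_r. f_equal. simpl. lia.
  - assert (Hq : r / b < b ^ p) by (apply Nat.Div0.div_lt_upper_bound; simpl in Hr; lia).
    destruct (IH (r / b) Hq) as [t Ht].
    exists (t ++ [r mod b]).
    assert (1 <= b ^ p) by (apply Nat.neq_0_lt_0, Nat.pow_nonzero; lia).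
    replace (b ^ S p * x + r) with (b * (b ^ p * x + r / b) + r mod b)
      by (rewrite (Nat.div_mod r b) at 3 by lia; simpl; ring).
    rewrite digits_snoc, Ht, app_assoc by (try apply Nat.mod_upper_bound; nia).
    reflexivity.
Qed.

Definition undigits (b : nat) (w : list nat) : nat :=
  fold_left (fun acc d => acc * b + d) w 0.

Lemma undigits_snoc b w d : undigits b (w ++ [d]) = undigits b w * b + d.
Proof. unfold undigits. now rewrite fold_left_app. Qed.

Lemma undigits_lt b w : List.Forall (fun d => d < b) w -> undigits b w < b ^ length w.
Proof.
  induction w as [|d w IH] using rev_ind; intros Hw; [cbn; lia|].
  apply Forall_app in Hw as [Hw Hd]. inversion Hd; subst.
  rewrite undigits_snoc, length_app, Nat.pow_add_r. specialize (IH Hw). simpl. nia.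
Qed.

Lemma digits_shift_undigits b w x :
  2 <= b -> 1 <= x -> List.Forall (fun d => d < b) w ->
  digits b (b ^ length w * x + undigits b w) = digits b x ++ w.
Proof.
  intros Hb Hx. induction w as [|d w IH] using rev_ind; intros Hw.
  - rewrite app_nil_r. f_equal. cbn. lia.
  - apply Forall_app in Hw as [Hw Hd]. inversion Hd; subst.
    replace (b ^ length (w ++ [d]) * x + undigits b (w ++ [d]))
      with (b * (b ^ length w * x + undigits b w) + d)
      by (rewrite undigits_snoc, length_app, Nat.pow_add_r; simpl; ring).
    rewrite digits_snoc, IH, app_assoc by (auto; assert (1 <= b ^ length w) by
      (apply Nat.neq_0_lt_0, Nat.pow_nonzero; lia); nia).
    reflexivity.
Qed.

Definition occurs_at (w s : list nat) (i : nat) : bool :=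
  if list_eq_dec Nat.eq_dec (firstn (length w) (skipn i s)) w then true else false.

Lemma occurs_at_app_l w s t i :
  occurs_at w s i = true -> occurs_at w (s ++ t) i = true.
Proof.
  unfold occurs_at.
  destruct (list_eq_dec _ (firstn (length w) (skipn i s)) w) as [E|]; [intros _|discriminate].
  assert (Hlen : length w <= length (skipn i s))
    by (rewrite <- E at 1; rewrite length_firstn; lia).
  rewrite skipn_app, firstn_app.
  replace (length w - length (skipn i s)) with 0 by lia.
  rewrite firstn_O, app_nil_r, E.
  destruct (list_eq_dec _ w w); congruence.
Qed.

Lemma occurs_at_app_r w s t j :
  occurs_at w (s ++ t) (length s + j) = occurs_at w t j.
Proof.
  unfold occurs_at. rewrite skipn_app, skipn_all2 by lia.
  now replace (length s + j - length s) with j by lia.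
Qed.

Lemma filter_length_mono {A} (f g : A -> bool) l :
  (forall x, f x = true -> g x = true) -> length (filter f l) <= length (filter g l).
Proof.
  intros H; induction l as [|x l IH]; simpl; [lia|].
  destruct (f x) eqn:E; [rewrite (H x E); simpl; lia|].
  destruct (g x); simpl; lia.
Qed.

Lemma seq_add_start a k n : seq (a + k) n = map (Nat.add a) (seq k n).
Proof.
  revert k; induction n as [|n IH]; intros k; [reflexivity|].
  simpl. rewrite <- IH. do 2 f_equal. lia.
Qed.

Lemma occ_app w s t : occ w s + occ w t <= occ w (s ++ t).
Proof.
  unfold occ. fold (occurs_at w s). fold (occurs_at w t). fold (occurs_at w (s ++ t)).
  rewrite length_app, seq_app, filter_app, length_app.
  apply Nat.add_le_mono.
  - apply filter_length_mono, occurs_at_app_l.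
  - rewrite Nat.add_0_l, <- (Nat.add_0_r (length s)), seq_add_start,
      filter_map_swap, length_map.
    apply Nat.eq_le_incl. f_equal. apply filter_ext. intros j.
    symmetry. apply occurs_at_app_r.
Qed.

Lemma occ_self w : 1 <= length w -> 1 <= occ w w.
Proof.
  intros H. unfold occ. destruct (length w) eqn:E; [lia|].
  cbn [seq filter]. rewrite skipn_O, <- E, firstn_all.
  destruct (list_eq_dec Nat.eq_dec w w); [simpl; lia | congruence].
Qed.

Open Scope R_scope.

Fixpoint psum (f : nat -> R) (n : nat) : R :=
  match n with O => 0 | S k => psum f k + f k end.

Lemma psum_le f g n : (forall i, (i < n)%nat -> f i <= g i) -> psum f n <= psum g n.
Proof.
  induction n as [|n IH]; intros H; simpl; [lra|].
  assert (f n <= g n) by (apply H; lia).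
  assert (psum f n <= psum g n) by (apply IH; intros; apply H; lia).
  lra.
Qed.

Lemma psum_scal_l c f n : psum (fun i => c * f i) n = c * psum f n.
Proof. induction n as [|n IH]; simpl; [ring | rewrite IH; ring]. Qed.

Lemma psum_add_len f n k : psum f (n + k) = psum f n + psum (fun i => f (n + i)%nat) k.
Proof.
  induction k as [|k IH]; simpl.
  - rewrite Nat.add_0_r; ring.
  - rewrite Nat.add_succ_r. simpl. rewrite IH. ring.
Qed.

Lemma psum_le_mono f n m : (forall i, 0 <= f i) -> (n <= m)%nat -> psum f n <= psum f m.
Proof.
  intros Hf H. induction H as [|m H IH]; [lra|]. simpl. specialize (Hf m). lra.
Qed.

Lemma sum_n_psum f n : sum_n f n = psum f (S n).
Proof.
  induction n as [|n IH].
  - rewrite sum_O. simpl. now rewrite Rplus_0_l.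
  - rewrite sum_Sn, IH. reflexivity.
Qed.

Section BlockContraction.

Variables (f : nat -> R) (B : nat) (c : R).
Hypotheses (f_ge0 : forall n, 0 <= f n) (B_ge1 : (1 <= B)%nat) (c_ge0 : 0 <= c) (c_lt1 : c < 1).
Hypothesis block_le :
  forall m, (1 <= m)%nat -> psum (fun r => f (B * m + r)%nat) B <= c * f m.

Lemma psum_mul_block_le M : psum f (B * S M) <= psum f B + c * psum f (S M).
Proof.
  induction M as [|M IH].
  - rewrite Nat.mul_1_r. simpl. pose proof (Rmult_le_pos _ _ c_ge0 (f_ge0 0)). lra.
  - rewrite Nat.mul_succ_r, psum_add_len.
    pose proof (block_le (S M) ltac:(lia)).
    change (psum f (S (S M))) with (psum f (S M) + f (S M)). lra.
Qed.

Lemma psum_le_block_bound n : psum f n <= psum f B / (1 - c).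
Proof.
  set (X := psum f (B * S n)).
  assert (HX : X <= psum f B + c * X).
  { assert (Hprefix : psum f (S n) <= X) by (apply psum_le_mono; auto; nia).
    pose proof (psum_mul_block_le n) as Hblocks. fold X in Hblocks.
    pose proof (Rmult_le_compat_l c _ _ c_ge0 Hprefix). lra. }
  assert (psum f n <= X) by (apply psum_le_mono; auto; nia).
  apply Rle_trans with X; [assumption|].
  apply Rle_div_r; lra.
Qed.

Lemma ex_series_block_contraction : ex_series f.
Proof.
  destruct (ex_finite_lim_seq_incr (sum_n f) (psum f B / (1 - c))) as [l Hl].
  - intros n. rewrite !sum_n_psum. simpl. specialize (f_ge0 (S n)). lra.
  - intros n. rewrite sum_n_psum. apply psum_le_block_bound.
  - exists l. exact Hl.
Qed.

End BlockContraction.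

Definition halve_at (a r : nat) : R := / 2 ^ (if r =? a then 1 else 0).

Lemma psum_halve_at a n : psum (halve_at a) n = INR n - (if a <? n then / 2 else 0).
Proof.
  induction n as [|n IH]; cbn [psum].
  - destruct (Nat.ltb_spec a 0); [lia | simpl; ring].
  - rewrite IH, S_INR. unfold halve_at.
    destruct (Nat.ltb_spec a n), (Nat.ltb_spec a (S n)), (Nat.eqb_spec n a);
      try lia; simpl; lra.
Qed.

Definition damped_harmonic (b : nat) (w : list nat) (m : nat) : R :=
  if Nat.ltb 0 m then / 2 ^ occ w (digits b m) * / INR m else 0.

Lemma damped_harmonic_ge0 b w m : 0 <= damped_harmonic b w m.
Proof.
  unfold damped_harmonic. destruct (Nat.ltb_spec 0 m); [|lra].
  apply Rmult_le_pos; left; apply Rinv_0_lt_compat;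
    [apply pow_lt; lra | apply lt_0_INR; lia].
Qed.

Section DampedHarmonic.

Variables (b : nat) (w : list nat).
Hypotheses (Hb : (2 <= b)%nat) (Hw : (1 <= length w)%nat)
  (Hdig : List.Forall (fun d => (d < b)%nat) w).

Let B := (b ^ length w)%nat.

Let B_ge1 : (1 <= B)%nat.
Proof. apply Nat.neq_0_lt_0, Nat.pow_nonzero; lia. Qed.

Lemma occ_digits_child m r : (1 <= m)%nat -> (r < B)%nat ->
  (occ w (digits b m) + (if r =? undigits b w then 1 else 0)
    <= occ w (digits b (B * m + r)))%nat.
Proof.
  intros Hm Hr. unfold B in *. destruct (Nat.eqb_spec r (undigits b w)) as [->|_].
  - rewrite digits_shift_undigits by assumption.
    pose proof (occ_app w (digits b m) w). pose proof (occ_self w Hw). lia.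
  - destruct (digits_shift_add b (length w) m r Hb Hm Hr) as [t ->].
    pose proof (occ_app w (digits b m) t). lia.
Qed.

Lemma damped_harmonic_child_le m r : (1 <= m)%nat -> (r < B)%nat ->
  damped_harmonic b w (B * m + r) <=
  damped_harmonic b w m * / INR B * halve_at (undigits b w) r.
Proof.
  intros Hm Hr. pose proof B_ge1.
  unfold damped_harmonic, halve_at.
  destruct (Nat.ltb_spec 0 (B * m + r)); [|nia].
  destruct (Nat.ltb_spec 0 m); [|lia].
  assert (Hocc : / 2 ^ occ w (digits b (B * m + r)) <=
    / 2 ^ occ w (digits b m) * / 2 ^ (if r =? undigits b w then 1 else 0)).
  { rewrite <- Rinv_mult, <- pow_add.
    apply Rinv_le_contravar; [apply pow_lt; lra|].
    apply Rle_pow; [lra|]. now apply occ_digits_child. }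
  assert (Hinv : / INR (B * m + r) <= / INR B * / INR m).
  { rewrite <- Rinv_mult, <- mult_INR.
    apply Rinv_le_contravar; [apply lt_0_INR; lia | apply le_INR; lia]. }
  replace (/ 2 ^ occ w (digits b m) * / INR m * / INR B *
           / 2 ^ (if r =? undigits b w then 1 else 0))%R
    with ((/ 2 ^ occ w (digits b m) * / 2 ^ (if r =? undigits b w then 1 else 0))
          * (/ INR B * / INR m)) by ring.
  apply Rmult_le_compat; auto; left; apply Rinv_0_lt_compat;
    [apply pow_lt; lra | apply lt_0_INR; lia].
Qed.

Lemma damped_harmonic_block_le m : (1 <= m)%nat ->
  psum (fun r => damped_harmonic b w (B * m + r)) B <=
  (1 - / (2 * INR B)) * damped_harmonic b w m.
Proof.
  intros Hm. pose proof B_ge1.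
  eapply Rle_trans.
  - apply psum_le with (g := fun r => damped_harmonic b w m * / INR B * halve_at (undigits b w) r).
    intros r Hr. now apply damped_harmonic_child_le.
  - rewrite psum_scal_l, psum_halve_at.
    destruct (Nat.ltb_spec (undigits b w) B); [|pose proof (undigits_lt b w Hdig); unfold B in *; lia].
    assert (1 <= INR B) by (apply (le_INR 1); lia).
    apply Req_le. field. lra.
Qed.

Lemma ex_series_damped_harmonic : ex_series (damped_harmonic b w).
Proof.
  pose proof B_ge1.
  assert (1 <= INR B) by (apply (le_INR 1); lia).
  assert (/ (2 * INR B) <= / 2) by (apply Rinv_le_contravar; lra).
  assert (0 < / (2 * INR B)) by (apply Rinv_0_lt_compat; lra).
  apply (ex_series_block_contraction _ B (1 - / (2 * INR B)));
    auto using damped_harmonic_ge0, damped_harmonic_block_le; lra.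
Qed.

End DampedHarmonic.

Lemma harmonic_occ_eq_le_damped b w k m :
  Rabs (if andb (Nat.ltb 0 m) (Nat.eqb (occ w (digits b m)) k) then / INR m else 0) <=
  2 ^ k * damped_harmonic b w m.
Proof.
  assert (H2k : 0 < 2 ^ k) by (apply pow_lt; lra).
  pose proof (damped_harmonic_ge0 b w m) as Hge0.
  unfold damped_harmonic in *.
  destruct (Nat.ltb_spec 0 m); [|simpl; rewrite Rabs_R0; lra].
  destruct (Nat.eqb_spec (occ w (digits b m)) k) as [->|]; simpl; [|rewrite Rabs_R0; nra].
  assert (0 < INR m) by (apply lt_0_INR; lia).
  rewrite Rabs_pos_eq by (left; apply Rinv_0_lt_compat; lra).
  apply Req_le. field. lra.
Qed.

Theorem lemma2 (b : nat) (w : list nat) (k : nat)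
  (Hb : (2 <= b)%nat) (Hw : (1 <= length w)%nat)
  (Hdig : List.Forall (fun d => (d < b)%nat) w) :
  ex_series (fun m : nat =>
    if andb (Nat.ltb 0 m) (Nat.eqb (occ w (digits b m)) k)
    then (/ INR m)%R else 0%R).
Proof.
  apply (@ex_series_le R_AbsRing R_CompleteNormedModule) with (b := fun m => 2 ^ k * damped_harmonic b w m).
  - intros m. apply harmonic_occ_eq_le_damped.
  - apply (ex_series_scal_l (V := R_NormedModule) (2 ^ k)).
    now apply ex_series_damped_harmonic.
Qed.
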